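(* Let $(\mathcal{X},\rho)$ be a metric space and let $\mu_s,\mu_t$ be Borel probability measures on $\mathcal{X}$ with finite first moment. Let $H$ be a class of functions $h:\mathcal{X}\to[0,1]$, and assume every $h\in H$ is $K$-Lipschitz continuous with respect to $\rho$ for some constant $K$. Then for every $h,h'\in H$, $$\epsilon_t(h,h')\le \epsilon_s(h,h')+2K\,W_1(\mu_s,\mu_t).$$
   Context: For a probability measure $\mu$ on $\mathcal{X}$ and functions $h,h':\mathcal{X}\to[0,1]$, define $\epsilon_\mu(h,h')=\mathbb{E}_{x\sim\mu}[|h(x)-h'(x)|]$; write $\epsilon_s=\epsilon_{\mu_s}$ and $\epsilon_t=\epsilon_{\mu_t}$. The (first) Wasserstein distance is $W_1(\mathbb{P},\mathbb{Q})=\inf_{\gamma\in\Gamma(\mathbb{P},\mathbb{Q})}\int\rho(x,y)\,d\gamma(x,y)$, where $\Gamma(\mathbb{P},\mathbb{Q})$ is the set of couplings of $\mathbb{P}$ and $\mathbb{Q}$; by Kantorovich–Rubinstein duality (for separable $\mathcal{X}$) it equals $\sup_{\|f\|_L\le 1}\mathbb{E}_{\mathbb{P}}[f]-\mathbb{E}_{\mathbb{Q}}[f]$, with $\|f\|_L=\sup_{x\ne y}|f(x)-f(y)|/\rho(x,y)$. *)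

From HB Require Import structures.
From mathcomp Require Import all_boot all_order all_algebra.
From mathcomp Require Import all_classical all_reals all_analysis.
Set Implicit Arguments. Unset Strict Implicit. Unset Printing Implicit Defensive.
Import Order.TTheory GRing.Theory Num.Theory.
Local Open Scope classical_set_scope.
Local Open Scope ring_scope.

Section Defs.
Context {R : realType} {d : measure_display} {X : measurableType d}.

Definition is_metric (rho : X -> X -> R) : Prop :=
  [/\ forall x y, 0 <= rho x y,
      forall x y, rho x y = 0 <-> x = y,
      forall x y, rho x y = rho y x &
      forall x y z, rho x z <= rho x y + rho y z].

Definition metric_open (rho : X -> X -> R) : set (set X) :=
  [set A | forall x, A x -> exists2 r : R, 0 < r & [set y | rho x y < r] `<=` A].

Definition is_borel (rho : X -> X -> R) : Prop :=
  (@measurable d X) = <<s metric_open rho >>.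

Definition finite_first_moment (rho : X -> X -> R) (mu : probability X R) : Prop :=
  exists x0 : X, (\int[mu]_x (rho x0 x)%:E < +oo)%E.

Definition coupling (P Q : probability X R) : set (probability (X * X)%type R) :=
  [set g | forall A : set X, measurable A ->
       g (A `*` setT) = P A /\ g (setT `*` A) = Q A].

Definition W1 (rho : X -> X -> R) (P Q : probability X R) : \bar R :=
  ereal_inf [set (\int[g]_z (rho z.1 z.2)%:E)%E | g in coupling P Q].

Definition eps (mu : probability X R) (h h' : X -> R) : \bar R :=
  (\int[mu]_x `|h x - h' x|%:E)%E.

End Defs.

From mathcomp Require Import all_boot all_order all_algebra.
From mathcomp Require Import all_classical all_reals all_analysis.
From mathcomp Require Import measurable_realfun.
From mathcomp Require Import ring lra.
Import Order.TTheory GRing.Theory Num.Theory.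
Local Open Scope classical_set_scope.
Local Open Scope ring_scope.

(* For a coupling g of mu_s and mu_t, f := |h - h'| is 2K-Lipschitz, so
   f y <= f x + 2K rho(x, y); integrating against g, whose marginals turn the
   integrals of f x and f y into eps_s and eps_t, and taking the infimum over
   all couplings gives the bound.  Since rho need not be measurable on X * X,
   one integrates instead the measurable minorant (f y - f x)^+ / 2K of rho,
   using that the integral of nonnegative functions is monotone even without
   measurability.  When K <= 0, h and h' are constant, so eps_s = eps_t, and
   2K W1 = 0 (for K < 0, rho vanishes identically). *)

Section lipschitz.
Context {R : realDomainType} {T : Type}.

Definition lipschitz_for (rho : T -> T -> R) (K : R) (h : T -> R) : Prop :=
  forall x y, `|h x - h y| <= K * rho x y.

Lemma lipschitz_normB {rho K h h'} :
  lipschitz_for rho K h -> lipschitz_for rho K h' ->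
  lipschitz_for rho (2 * K) (fun x => `|h x - h' x|).
Proof.
move=> hK h'K x y; apply: le_trans (ler_dist_dist _ _) _.
have -> : h x - h' x - (h y - h' y) = (h x - h y) - (h' x - h' y) by ring.
have := ler_normB (h x - h y) (h' x - h' y); have := hK x y; have := h'K x y.
lra.
Qed.

Lemma nonpos_lipschitz_cst {rho K h} : (forall x y, 0 <= rho x y) -> K <= 0 ->
  lipschitz_for rho K h -> forall x y, h x = h y.
Proof.
move=> rho0 K0 hK x y; apply/eqP; rewrite -subr_eq0 -normr_le0.
exact: le_trans (hK x y) (mulr_le0_ge0 K0 (rho0 x y)).
Qed.

Lemma neg_lipschitz_rho0 {rho K h} : (forall x y, 0 <= rho x y) -> K < 0 ->
  lipschitz_for rho K h -> forall x y, rho x y = 0.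
Proof.
move=> rho0 K0 hK x y; apply/eqP; rewrite eq_le rho0 andbT.
by rewrite -(nmulr_rge0 _ K0) (le_trans _ (hK x y)).
Qed.

End lipschitz.

Lemma lipschitz_measurable {R : realType} {d} {X : measurableType d}
    {rho : X -> X -> R} {K} {h : X -> R} :
  is_borel rho -> 0 < K -> lipschitz_for rho K h -> measurable_fun setT h.
Proof.
move=> bor K0 hK.
apply: (measurability _ (RGenOInfty.measurableE R)) => _ [_ [a ->] <-].
rewrite bor; apply: sub_sigma_algebra => x [_ /=]; rewrite in_itv /= andbT => ax.
exists ((h x - a) / K); first by rewrite divr_gt0 // subr_gt0.
move=> y /= rxy; split => //=; rewrite in_itv /= andbT.
have : K * rho x y < h x - a by rewrite mulrC -ltr_pdivlMr.
have := hK x y; have := ler_norm (h x - h y); lra.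
Qed.

Section integrals.
Local Open Scope ereal_scope.
Context {R : realType} {d : measure_display} {T : measurableType d}.

Lemma ge0_le_integral_nonmeasurable (mu : measure T R) (f g : T -> \bar R) :
  (forall x, 0 <= f x) -> (forall x, f x <= g x) ->
  \int[mu]_x f x <= \int[mu]_x g x.
Proof.
move=> f0 fg; have g0 x : 0 <= g x := le_trans (f0 x) (fg x).
rewrite (ge0_integralTE _ f0) (ge0_integralTE _ g0).
apply: ereal_sup_le => _ [s sf <-]; exists s => // x.
exact: le_trans (sf x) (fg x).
Qed.

Lemma ge0_integral_marginal {d'} {X : measurableType d'}
    (mu : measure T R) (P : measure X R) (p : T -> X) (f : X -> \bar R) :
  measurable_fun setT p -> (forall A, measurable A -> mu (p @^-1` A) = P A) ->
  measurable_fun setT f -> (forall x, 0 <= f x) ->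
  \int[mu]_z f (p z) = \int[P]_x f x.
Proof.
move=> mp muP mf f0.
rewrite -[LHS]/(\int[mu]_z (f \o p) z) -(preimage_setT p).
rewrite -(ge0_integral_pushforward mp _ measurableT mf (fun y _ => f0 y)).
by apply: eq_measure_integral => A mA _; exact: muP.
Qed.

Lemma integral_probability_cst (P Q : probability T R) (f : T -> \bar R) :
  (forall x y, f x = f y) -> \int[P]_x f x = \int[Q]_x f x.
Proof.
move=> fc; have : [set: T] != set0.
  apply/eqP => T0; have := probability_setT P.
  by rewrite T0 measure0 => /esym/eqP; rewrite onee_eq0.
case/set0P => x0 _; under eq_integral do rewrite (fc _ x0).
under [RHS]eq_integral do rewrite (fc _ x0).
rewrite !integral_cst //; congr (_ * _).
exact: etrans (probability_setT P) (esym (probability_setT Q)).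
Qed.

End integrals.

Lemma le_EFinD_pmul_ereal_inf {R : realType} (S : set (\bar R)) (y : \bar R) (a k : R) :
  0 < k -> (forall x, S x -> y <= a%:E + k%:E * x)%E ->
  (y <= a%:E + k%:E * ereal_inf S)%E.
Proof.
move=> k0 yS; rewrite -ereal_inf_pZl // -leeBlDl //.
by apply: le_ereal_inf_tmp => _ [x Sx <-]; rewrite leeBlDl //; exact: yS.
Qed.

Section coupling.
Local Open Scope ereal_scope.
Context {R : realType} {d : measure_display} {X : measurableType d}.
Implicit Types (P Q : probability X R) (g : probability (X * X)%type R).

Lemma coupling_integral_fst {P Q g} (f : X -> \bar R) : coupling P Q g ->
  measurable_fun setT f -> (forall x, 0 <= f x) ->
  \int[g]_z f z.1 = \int[P]_x f x.
Proof.
move=> cg; apply: ge0_integral_marginal measurable_fst _ => A mA.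
by rewrite -setXT; have [] := cg A mA.
Qed.

Lemma coupling_integral_snd {P Q g} (f : X -> \bar R) : coupling P Q g ->
  measurable_fun setT f -> (forall x, 0 <= f x) ->
  \int[g]_z f z.2 = \int[Q]_x f x.
Proof.
move=> cg; apply: ge0_integral_marginal measurable_snd _ => A mA.
by rewrite -setTX; have [] := cg A mA.
Qed.

Lemma product_coupling P Q : coupling P Q (P \x Q).
Proof.
move=> A mA; split.
- rewrite -[RHS]mule1 -(probability_setT Q); exact: product_measure1E.
- rewrite -[RHS]mul1e -(probability_setT P); exact: product_measure1E.
Qed.

Lemma W1_ge0 (rho : X -> X -> R) P Q : (forall x y, (0 <= rho x y)%R) ->
  0 <= W1 rho P Q.
Proof.
move=> rho0; apply: le_ereal_inf_tmp => _ [g _ <-].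
by apply: integral_ge0 => z _; rewrite lee_fin.
Qed.

Lemma W1_rho0 (rho : X -> X -> R) P Q : (forall x y, rho x y = 0%R) ->
  W1 rho P Q = 0.
Proof.
move=> rho0; apply/eqP; rewrite eq_le W1_ge0 ?andbT => [|x y]; last by rewrite rho0.
apply: ereal_inf_lbound; exists (P \x Q); first exact: product_coupling.
by rewrite integral0_eq // => z _; rewrite rho0.
Qed.

End coupling.

Section transport.
Local Open Scope ereal_scope.
Context {R : realType} {d : measure_display} {X : measurableType d}.
Variables (rho : X -> X -> R) (P Q : probability X R) (f : X -> R) (k : R).
Hypotheses (k0 : (0 < k)%R) (mf : measurable_fun setT f)
  (f0 : forall x, (0 <= f x)%R) (fk : lipschitz_for rho k f).

Let v (z : X * X) : R := (Order.max 0 (f z.2 - f z.1) / k)%R.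

Let mf1 : measurable_fun setT (fun z : X * X => f z.1).
Proof. exact: measurableT_comp mf measurable_fst. Qed.

Let mf2 : measurable_fun setT (fun z : X * X => f z.2).
Proof. exact: measurableT_comp mf measurable_snd. Qed.

Let mv : measurable_fun setT v.
Proof.
apply: measurable_funM => //; apply: measurable_maxr => //.
exact: measurable_funB.
Qed.

Let v_ge0 z : (0 <= v z)%R.
Proof. by rewrite divr_ge0 ?le_max ?lexx // ltW. Qed.

Let f_le_v z : (f z.2 <= f z.1 + k * v z)%R.
Proof. by rewrite mulrC divfK ?gt_eqF // -lerBlDl le_max lexx orbT. Qed.

Let v_le_rho z : (v z <= rho z.1 z.2)%R.
Proof.
have fz : (`|f z.2 - f z.1| <= k * rho z.1 z.2)%R by rewrite distrC; exact: fk.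
rewrite ler_pdivrMr // mulrC ge_max (le_trans _ fz) //=.
exact: le_trans (ler_norm _) fz.
Qed.

Lemma coupling_integral_le g : coupling P Q g ->
  \int[Q]_x (f x)%:E <= \int[P]_x (f x)%:E + k%:E * \int[g]_z (rho z.1 z.2)%:E.
Proof.
move=> cg; have f0E x : 0 <= (f x)%:E by rewrite lee_fin.
have mfE : measurable_fun setT (fun x => (f x)%:E) by exact/measurable_EFinP.
rewrite -(coupling_integral_fst _ cg) // -(coupling_integral_snd _ cg) //.
have f0E1 z : [set: X * X] z -> 0 <= (f z.1)%:E by move=> _; exact: f0E.
have kv0 z : [set: X * X] z -> 0 <= k%:E * (v z)%:E.
  by move=> _; rewrite -EFinM lee_fin mulr_ge0 // ltW.
have mf1E : measurable_fun setT (fun z : X * X => (f z.1)%:E).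
  exact/measurable_EFinP.
have mkvE : measurable_fun setT (fun z => k%:E * (v z)%:E).
  by apply/measurable_EFinP; exact: measurable_funM.
apply: (@le_trans _ _ (\int[g]_z ((f z.1)%:E + k%:E * (v z)%:E))).
  apply: ge0_le_integral => //; first exact/measurable_EFinP.
    by apply/measurable_EFinP; apply: measurable_funD => //; exact: measurable_funM.
  by move=> z _; rewrite -EFinM -EFinD lee_fin.
have k_ge0 : (0 <= k)%R := ltW k0.
rewrite ge0_integralD // ge0_integralZl_EFin //;
  [|by move=> z _; rewrite lee_fin | exact/measurable_EFinP].
apply: leeD => //; apply: lee_wpmul2l; first by rewrite lee_fin.
by apply: ge0_le_integral_nonmeasurable => z; rewrite lee_fin.
Qed.

Lemma le_W1 : (forall x, f x <= 1)%R ->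
  \int[Q]_x (f x)%:E <= \int[P]_x (f x)%:E + k%:E * W1 rho P Q.
Proof.
move=> f1; have f0E x : 0 <= (f x)%:E by rewrite lee_fin.
have Pf_fin : \int[P]_x (f x)%:E \is a fin_num.
  rewrite ge0_fin_numE ?integral_ge0 //; apply: (@le_lt_trans _ _ 1); last exact: ltry.
  apply: (@le_trans _ _ (\int[P]_x (cst 1 x))).
    by apply: ge0_le_integral => //; [exact/measurable_EFinP | move=> x _; rewrite lee_fin].
  by rewrite integral_cst // mul1e probability_le1.
rewrite -(fineK Pf_fin); apply: le_EFinD_pmul_ereal_inf => // _ [g cg <-].
by rewrite fineK //; exact: coupling_integral_le.
Qed.

End transport.

Theorem lemma1 (R : realType) (d : measure_display) (X : measurableType d)
  (rho : X -> X -> R) (mu_s mu_t : probability X R)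
  (H : set (X -> R)) (K : R) :
  is_metric rho -> is_borel rho ->
  finite_first_moment rho mu_s -> finite_first_moment rho mu_t ->
  (forall h, H h -> forall x, 0 <= h x <= 1) ->
  (forall h, H h -> forall x y, `|h x - h y| <= K * rho x y) ->
  forall h h', H h -> H h' ->
  (eps mu_t h h' <= eps mu_s h h' + (2 * K)%:E * W1 rho mu_s mu_t)%E.
Proof.
move=> [rho_ge0 _ _ _] bor _ _ h01 hK h h' Hh Hh'.
pose f x := `|h x - h' x|.
have fK : lipschitz_for rho (2 * K) f := lipschitz_normB (hK h Hh) (hK h' Hh').
have f_le1 x : f x <= 1.
  have /andP[? ?] := h01 h Hh x; have /andP[? ?] := h01 h' Hh' x.
  by rewrite /f ler_norml; apply/andP; split; lra.
have eps_eq : K <= 0 -> eps mu_t h h' = eps mu_s h h'.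
  move=> K_le0; apply: integral_probability_cst => x y; congr (_%:E).
  by apply: nonpos_lipschitz_cst rho_ge0 _ fK _ _; rewrite pmulr_rle0.
have [K_lt0|K_gt0|K0] := ltgtP K 0.
- rewrite (eps_eq (ltW K_lt0)) W1_rho0 ?mule0 ?adde0 //.
  exact: neg_lipschitz_rho0 rho_ge0 K_lt0 (hK h Hh).
- have mh := lipschitz_measurable bor K_gt0 (hK h Hh).
  have mh' := lipschitz_measurable bor K_gt0 (hK h' Hh').
  apply: le_W1 fK f_le1; first by rewrite mulr_gt0.
  - by apply: measurableT_comp; [exact: normr_measurable | exact: measurable_funB].
  - by move=> x; exact: normr_ge0.
- by rewrite K0 mulr0 mul0e adde0 eps_eq ?K0.
Qed.
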